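(* For every constant $c\in\mathbb C$, the polynomial $z^m+\bar z^m$ is quasiharmonic, i.e. $F(z^m+\bar z^m)=0$. The polynomials $z\bar z$ and $z^m+\bar z^m$ are algebraically independent.
   Context: Let $m\ge2$, $\zeta=e^{2\pi i/m}$, and let $z,\bar z$ be independent variables. For $j=0,\dots,m-1$ let $s_j$ be the algebra automorphism of $\mathbb C[z,\bar z]$ with $s_j(z)=-\zeta^j\bar z$, $s_j(\bar z)=-\zeta^{-j}z$. For constant $c$ define Dunkl operators $Y(q)=\frac{\partial q}{\partial z}-c\sum_j\frac{q-s_j(q)}{z+\zeta^j\bar z}$, $\bar Y(q)=\frac{\partial q}{\partial\bar z}-c\sum_j\frac{q-s_j(q)}{\bar z+\zeta^{-j}z}$, and $F=-Y\bar Y$. *)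

From HB Require Import structures.
From mathcomp Require Import all_boot all_order all_algebra.
From mathcomp Require Import mpoly.
From Stdlib Require Import ClassicalEpsilon.
Set Implicit Arguments. Unset Strict Implicit. Unset Printing Implicit Defensive.
Import Order.TTheory GRing.Theory Num.Theory.
Local Open Scope ring_scope.

Section Dunkl.
(* C plays the role of the complex numbers: any numeric algebraically closed
   field (e.g. complex R for a real closed field R, in particular C itself). *)
Variable C : numClosedFieldType.

(* The polynomial ring C[z, zbar]: z = 'X_0, zbar = 'X_1. *)
Definition poly2 := {mpoly C[2]}.
Definition zv : poly2 := 'X_(@ord0 1).
Definition zbv : poly2 := 'X_(@ord_max 1).

(* zeta = e^{2 pi i / m}: m.-root (-1) is the m-th root of -1 of minimal
   non-negative argument, i.e. e^{i pi / m}; its square is e^{2 pi i / m}. *)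
Definition zeta (m : nat) : C := (m.-root (-1)) ^+ 2.

Definition sj (m j : nat) (q : poly2) : poly2 :=
  q \mPo [tuple - (zeta m ^+ j) *: zbv; - (zeta m ^- j) *: zv].

Definition exdiv (p l : poly2) : poly2 :=
  epsilon (inhabits (0 : poly2)) (fun r => p = l * r).

Definition DunklY (m : nat) (c : C) (q : poly2) : poly2 :=
  q^`M(@ord0 1)
  - c *: \sum_(j < m) exdiv (q - sj m j q) (zv + zeta m ^+ j *: zbv).

Definition DunklYbar (m : nat) (c : C) (q : poly2) : poly2 :=
  q^`M(@ord_max 1)
  - c *: \sum_(j < m) exdiv (q - sj m j q) (zbv + zeta m ^- j *: zv).

Definition DunklF (m : nat) (c : C) (q : poly2) : poly2 :=
  - DunklY m c (DunklYbar m c q).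

Definition quasiharmonic (m : nat) (c : C) (q : poly2) : Prop :=
  DunklF m c q = 0.

Definition alg_indep (p1 p2 : poly2) : Prop :=
  forall P : {mpoly C[2]}, P \mPo [tuple p1; p2] = 0 -> P = 0.

End Dunkl.

(* zeta m = (m.-root (-1))^2 is a primitive m-th root of unity.
   Otherwise r = m.-root (-1) satisfies r^d = -1 for a proper divisor d = m/t of m.
   If w^t = r then |1 - r| = |1 - w| |1 + w + ... + w^(t-1)|, and by Parseval the
   last factor has mean square t over the t-th roots w of r, so some such w has
   t |1 - w|^2 <= |1 - r|^2: an m-th root of -1 closer to 1 than r, against the
   choice of m.-root (-1) as the m-th root of -1 of largest real part.
   For q = z^m + zbar^m and for q = zbar^(m-1), q - s_j q is a multiple of
   zbar^n - (b_j z)^n with b_j = -zeta^-j, so each Dunkl quotient is a geometric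
   sum; summing over j, the character sums of zeta^-j keep a single term, whence
   Ybar q = m (1 - c (1 - (-1)^m)) zbar^(m-1) and Y zbar^(m-1) = 0.
   Algebraic independence: the leading monomials (1,1) of z zbar and (m,0) or
   (0,m) of z^m + zbar^m are N-linearly independent, so the terms of P(z zbar,
   z^m + zbar^m) have pairwise distinct leading monomials and cannot cancel. *)

From HB Require Import structures.
From mathcomp Require Import all_boot all_order all_algebra.
From mathcomp Require Import mpoly.
From mathcomp Require Import cyclic separable closed_field cyclotomic.
From mathcomp Require Import ring zify.
From Stdlib Require Import ClassicalEpsilon.
Set Implicit Arguments. Unset Strict Implicit. Unset Printing Implicit Defensive.
Import Order.TTheory GRing.Theory Num.Theory.
Local Open Scope ring_scope.

Lemma sum_expr_unity_root (R : idomainType) (x : R) n : x ^+ n = 1 ->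
  \sum_(i < n) x ^+ i = if x == 1 then n%:R else 0.
Proof.
case: eqP => [-> _ | /eqP x_neq1 xn1].
  by under eq_bigr do rewrite expr1n; rewrite sumr_const card_ord.
have /esym/eqP := subrX1 x n.
by rewrite xn1 subrr mulf_eq0 subr_eq0 (negbTE x_neq1) => /eqP.
Qed.

Lemma norm_expr_eq1 (R : numDomainType) (x : R) n :
  (0 < n)%N -> `|x ^+ n| = 1 -> `|x| = 1.
Proof. by move=> n_gt0; rewrite normrX => /eqP; rewrite pexpr_eq1 // => /eqP. Qed.

Lemma mderivXn n (R : nzRingType) (i j : 'I_n) k :
  ('X_i ^+ k : {mpoly R[n]})^`M(j) = ((i == j) * k)%:R *: 'X_i ^+ k.-1.
Proof.
rewrite !mpolyXn mderivX mulmnE mnm1E; case: eqP => [->|_]; last by rewrite !scale0r.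
rewrite mul1n; congr (_ *: _); congr mpolyX; apply/mnmP => l; rewrite mnmBE !mulmnE mnm1E.
by case: (j == l); rewrite ?mul1n ?mul0n ?subn1.
Qed.

Lemma mpolyX_addZ_neq0 n (R : nzRingType) (i j : 'I_n) (a : R) :
  i != j -> 'X_i + a *: 'X_j != 0 :> {mpoly R[n]}.
Proof.
move=> /negbTE i_neq_j; apply/eqP => /(congr1 (mderiv i)).
rewrite mderivD mderivZ -[X in X^`M(i) + _]expr1 -[X in _ *: X^`M(i)]expr1.
rewrite !mderivXn eqxx eq_sym i_neq_j mul0n scale0r scaler0 addr0 scale1r expr0 mderiv0.
by move/eqP; rewrite oner_eq0.
Qed.

Lemma mlead_neq0 n (R : nzRingType) (p : {mpoly R[n]}) : mlead p != 0%MM -> p != 0.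
Proof. by apply: contraNneq => ->; rewrite mlead0. Qed.

Section UnitCircle.
Variable C : numClosedFieldType.
Implicit Types x y u w g : C.

Lemma prim_root_exists n : (0 < n)%N -> exists g : C, n.-primitive_root g.
Proof.
move=> n_gt0; have [rs Xn1_eq] := closed_field_poly_normal ('X^n - 1 : {poly C}).
rewrite (monicP _) ?monicXnsubC // scale1r in Xn1_eq.
have unity_rs : all n.-unity_root rs.
  by apply/allP => x; rewrite -root_prod_XsubC -Xn1_eq.
have uniq_rs : uniq rs.
  by rewrite -separable_prod_XsubC -Xn1_eq separable_Xn_sub_1 // pnatr_eq0 -lt0n.
have size_rs : (n < (size rs).+1)%N.
  by rewrite -(size_prod_XsubC rs id) -Xn1_eq size_XnsubC.
by have /hasP[g _ g_prim] := has_prim_root n_gt0 unity_rs uniq_rs size_rs; exists g.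
Qed.

Lemma conjC_unit x : `|x| = 1 -> x^* = x^-1.
Proof. by move=> x1; rewrite invC_norm x1 expr1n invr1 mul1r. Qed.

Lemma ltr_norm_1sub_unit x y : `|x| = 1 -> `|y| = 1 ->
  (`|1 - x| ^+ 2 < `|1 - y| ^+ 2) = ('Re y < 'Re x).
Proof.
have sqr_dist v : `|v| = 1 -> `|1 - v| ^+ 2 = 2 - 2 * 'Re v.
  move=> v1; have vv : v * v^* = 1 by rewrite -normCK v1 expr1n.
  rewrite normCK ReE [2 * _]mulrC divfK ?pnatr_eq0 // rmorphB rmorph1.
  by rewrite mulrBr !mulrBl vv; ring.
by move=> x1 y1; rewrite !sqr_dist // ltrD2l ltrN2 ltr_pM2l ?ltr0n.
Qed.

Lemma parseval_prim_root g t (a : 'I_t -> C) : t.-primitive_root g ->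
  \sum_(k < t) `|\sum_(j < t) a j * g ^+ (j * k)| ^+ 2
    = t%:R * \sum_(j < t) `|a j| ^+ 2.
Proof.
move=> g_prim; have t_gt0 := prim_order_gt0 g_prim.
have g1 : `|g| = 1 by apply: (norm_expr_eq1 t_gt0); rewrite prim_expr_order ?normr1.
have g_neq0 : g != 0 by rewrite -normr_eq0 g1 oner_neq0.
have orth (j l : 'I_t) :
    \sum_(k < t) (g ^+ j / g ^+ l) ^+ k = if j == l then t%:R else 0.
  rewrite sum_expr_unity_root; last first.
    by rewrite exprMn exprVn !(exprAC _ _ t) (prim_expr_order g_prim) !expr1n invr1 mulr1.
  rewrite -[_ == 1](inj_eq (mulIf (expf_neq0 l g_neq0))) divfK ?expf_neq0 // mul1r.
  by rewrite (eq_prim_root_expr g_prim) !modn_small.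
have expand k : `|\sum_(j < t) a j * g ^+ (j * k)| ^+ 2
    = \sum_(j < t) \sum_(l < t) a j * (a l)^* * (g ^+ j / g ^+ l) ^+ k.
  rewrite normCK rmorph_sum mulr_suml; apply: eq_bigr => j _.
  rewrite mulr_sumr; apply: eq_bigr => l _.
  rewrite rmorphM rmorphXn /= (conjC_unit g1) exprMn !exprVn -!exprM.
  by rewrite mulrACA.
under eq_bigr do rewrite expand.
rewrite exchange_big mulr_sumr; apply: eq_bigr => j _ /=.
rewrite exchange_big (bigD1 j) //= [X in _ + X]big1 ?addr0 => [|l /negbTE l_neq_j].
  by rewrite -mulr_sumr orth eqxx normCK mulrC.
by rewrite -mulr_sumr orth eq_sym l_neq_j mulr0.
Qed.

Lemma exists_root_near1 u t : (0 < t)%N -> `|u| = 1 ->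
  exists2 w, w ^+ t = u & t%:R * `|1 - w| ^+ 2 <= `|1 - u| ^+ 2.
Proof.
move=> t_gt0 u1; have [g g_prim] := prim_root_exists t_gt0.
pose w k := t.-root u * g ^+ k.
have wt k : w k ^+ t = u.
  by rewrite exprMn rootCK // exprAC (prim_expr_order g_prim) expr1n mulr1.
pose S k := \sum_(j < t) w k ^+ j.
have factor k : `|1 - u| ^+ 2 = `|1 - w k| ^+ 2 * `|S k| ^+ 2.
  by rewrite -exprMn -normrM -[1 - w k]opprB mulNr -subrX1 wt opprB.
have sum_S : \sum_(k < t) `|S k| ^+ 2 = (t * t)%:R.
  have root1 : `|t.-root u| = 1 by apply: (norm_expr_eq1 t_gt0); rewrite rootCK.
  transitivity (t%:R * \sum_(j < t) `|t.-root u ^+ j| ^+ 2).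
    rewrite -(parseval_prim_root _ g_prim); apply: eq_bigr => k _; congr (`|_| ^+ 2).
    by apply: eq_bigr => j _; rewrite exprMn -exprM mulnC.
  under eq_bigr do rewrite normrX root1 !expr1n.
  by rewrite sumr_const card_ord natrM mulr_natr.
have [k tS] : exists k : 'I_t, t%:R <= `|S k| ^+ 2.
  apply/existsP; apply: contraT => /existsPn S_small.
  have : \sum_(k < t) `|S k| ^+ 2 < \sum_(k < t) t%:R.
    apply: ltr_sum => [|k _]; first by apply/hasP; exists (Ordinal t_gt0); rewrite ?mem_index_enum.
    by rewrite real_ltNge ?S_small ?realn ?rpredX ?normr_real.
  by rewrite sum_S sumr_const card_ord natrM mulr_natr ltxx.
by exists (w k) => //; rewrite (factor k) mulrC ler_wpM2l ?exprn_ge0.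
Qed.

Lemma rootC_Re_max_real n x y :
  (0 < n)%N -> x \is Num.real -> y ^+ n = x -> 'Re y <= 'Re (n.-root x).
Proof.
move=> n_gt0 x_real yn_x; have [Im_ge0|Im_lt0] := real_ge0P (Creal_Im y).
  exact: rootC_Re_max.
rewrite -Re_conj; apply: rootC_Re_max => //.
  by rewrite -rmorphXn yn_x /= conj_Creal.
by rewrite Im_conj oppr_ge0 ltW.
Qed.
End UnitCircle.

Lemma rootCN1_expr_neqN1 (C : numClosedFieldType) m d :
  (0 < m)%N -> (d %| m)%N -> (d < m)%N -> m.-root (-1 : C) ^+ d != -1.
Proof.
move=> m_gt0 d_dvd_m d_lt_m; apply/eqP => rd; set r := m.-root (-1 : C) in rd.
have rm : r ^+ m = -1 := rootCK m_gt0 (-1).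
have r1 : `|r| = 1 by apply: (norm_expr_eq1 m_gt0); rewrite rm normrN normr1.
have [t m_eq] : exists t, m = (t * d)%N by exists (m %/ d)%N; rewrite divnK.
have t_gt1 : (1 < t)%N.
  by move: d_lt_m m_gt0; rewrite m_eq; case: t {m_eq} => [|[|t]] //; rewrite mul1n ltnn.
have [w wt near] := exists_root_near1 (ltnW t_gt1) r1.
have wm : w ^+ m = -1 by rewrite m_eq exprM wt.
have w1 : `|w| = 1 by apply: (norm_expr_eq1 m_gt0); rewrite wm normrN normr1.
have closer : `|1 - w| ^+ 2 < `|1 - r| ^+ 2.
  have r_neq1 : r != 1.
    by apply/eqP => r_eq1; move: rm; rewrite r_eq1 expr1n => /eqP; rewrite eq_sym eqNr oner_eq0.
  have dr_gt0 : 0 < `|1 - r| ^+ 2 by rewrite exprn_gt0 // normr_gt0 subr_eq0 eq_sym.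
  have [dw0|dw_neq0] := eqVneq (`|1 - w| ^+ 2) 0; first by rewrite dw0.
  by apply: lt_le_trans near; rewrite ltr_pMl ?ltr1n // lt0r dw_neq0 exprn_ge0.
rewrite (ltr_norm_1sub_unit w1 r1) in closer.
by have := lt_le_trans closer (rootC_Re_max_real m_gt0 (rpredN1 _) wm); rewrite ltxx.
Qed.

Lemma zeta_primitive_root (C : numClosedFieldType) m :
  (0 < m)%N -> m.-primitive_root (zeta C m).
Proof.
move=> m_gt0; set r := m.-root (-1 : C).
have rm : r ^+ m = -1 := rootCK m_gt0 (-1).
have zeta_m : zeta C m ^+ m = 1 by rewrite /zeta exprAC rm sqrrN expr1n.
have [d d_prim d_dvd_m] := prim_order_exists m_gt0 zeta_m.
suff d_eq_m : d = m by rewrite -d_eq_m in d_prim *.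
apply/eqP; rewrite eqn_leq dvdn_leq //= leqNgt; apply/negP => d_lt_m.
have /eqP := prim_expr_order d_prim; rewrite /zeta -/r exprAC sqrf_eq1.
case/orP=> /eqP rd.
  move: rm; rewrite -(divnK d_dvd_m) mulnC exprM rd expr1n => /eqP.
  by rewrite eq_sym eqNr oner_eq0.
by have := @rootCN1_expr_neqN1 C m d m_gt0 d_dvd_m d_lt_m; rewrite -/r rd eqxx.
Qed.

Section DunklComputations.
Variable C : numClosedFieldType.
Variable m : nat.
Hypothesis m_gt1 : (1 < m)%N.

Local Notation z := (zv C).
Local Notation w := (zbv C).
Local Notation ζ := (zeta C m).

Let ζ_prim : m.-primitive_root ζ := zeta_primitive_root C (ltnW m_gt1).

Lemma exdiv_eq (p l r : poly2 C) : l != 0 -> p = l * r -> exdiv p l = r.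
Proof.
move=> l_neq0 p_eq; apply: (mulfI l_neq0); rewrite -p_eq /exdiv.
by rewrite -(epsilon_spec (inhabits 0) (fun r => p = l * r) (ex_intro _ r p_eq)).
Qed.

Lemma sjD j : {morph sj (C := C) m j : p q / p + q}.
Proof. by move=> p q; rewrite /sj rmorphD. Qed.

Lemma sjZ j a (p : poly2 C) : sj m j (a *: p) = a *: sj m j p.
Proof. exact: comp_mpolyZ. Qed.

Lemma sj_zXn j n : sj m j (z ^+ n) = (- ζ ^+ j) ^+ n *: w ^+ n.
Proof. by rewrite /sj rmorphXn /= comp_mpolyXU /= exprZn. Qed.

Lemma sj_zbXn j n : sj m j (w ^+ n) = ((- ζ ^- j) *: z) ^+ n.
Proof. by rewrite /sj rmorphXn /= comp_mpolyXU. Qed.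

Lemma mderiv_max_zXn n : (z ^+ n)^`M(ord_max) = 0.
Proof. by rewrite mderivXn mul0n scale0r. Qed.

Lemma mderiv_max_zbXn n : (w ^+ n)^`M(ord_max) = n%:R *: w ^+ n.-1.
Proof. by rewrite mderivXn eqxx mul1n. Qed.

Lemma mderiv0_zbXn n : (w ^+ n)^`M(ord0) = 0.
Proof. by rewrite mderivXn mul0n scale0r. Qed.

Lemma zetaX_exprm j : (ζ ^+ j) ^+ m = 1.
Proof. by rewrite exprAC (prim_expr_order ζ_prim) expr1n. Qed.

Lemma sum_zeta_exprVn k :
  \sum_(j < m) (ζ ^- j) ^+ k = if (m %| k)%N then m%:R else 0.
Proof.
under eq_bigr do rewrite -exprVn exprAC exprVn.
rewrite sum_expr_unity_root; last by rewrite exprVn zetaX_exprm invr1.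
by rewrite invr_eq1 -(prim_order_dvd ζ_prim).
Qed.

Lemma sum_zeta_quotients e n : (0 < e + n <= m)%N ->
  \sum_(j < m) (ζ ^- j) ^+ e *: \sum_(i < n) w ^+ (n.-1 - i) * ((- ζ ^- j) *: z) ^+ i
    = ((e == 0%N) * m)%:R *: w ^+ n.-1.
Proof.
move=> /andP[en_gt0 en_le_m].
under eq_bigr do rewrite scaler_sumr.
rewrite exchange_big /=.
under eq_bigr => i _.
  have -> : \sum_(j < m) (ζ ^- j) ^+ e *: (w ^+ (n.-1 - i) * ((- ζ ^- j) *: z) ^+ i)
      = ((-1) ^+ i * \sum_(j < m) (ζ ^- j) ^+ (e + i)) *: (w ^+ (n.-1 - i) * z ^+ i).
    rewrite mulr_sumr scaler_suml; apply: eq_bigr => j _.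
    by rewrite exprZn -scalerAr scalerA (exprNn (ζ ^- j)) exprD mulrCA.
  rewrite sum_zeta_exprVn.
  over.
case: n en_gt0 en_le_m => [|n] en_gt0 en_le_m.
  by move: en_gt0; rewrite big_ord0 addn0 => /lt0n_neq0/negbTE ->; rewrite scale0r.
rewrite big_ord_recl /= big1 => [|i _]; last first.
  by rewrite gtnNdvd ?mulr0 ?scale0r //; have := ltn_ord i; rewrite /bump leq0n; lia.
have -> : (m %| e + 0)%N = (e == 0%N).
  by case: e en_le_m {en_gt0} => [|e] en_le_m; rewrite ?dvdn0 // gtnNdvd //; lia.
by case: (e == 0%N); rewrite expr0 mul1r subn0 expr0 mulr1 addr0 ?mul1n ?mul0n ?scale0r.
Qed.

Lemma DunklYbar_zXn_add_zbXn c : DunklYbar m c (z ^+ m + w ^+ m)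
  = (m%:R * (1 - c * (1 - (-1) ^+ m))) *: w ^+ m.-1.
Proof.
set s : C := (-1) ^+ m.
have ss : s * s = 1 by rewrite -expr2 exprAC sqrrN !expr1n.
have quots : \sum_(j < m)
      exdiv (z ^+ m + w ^+ m - sj m j (z ^+ m + w ^+ m)) (w + ζ ^- j *: z)
    = (1 - s) *: \sum_(j < m) (ζ ^- j) ^+ 0 *:
                   \sum_(i < m) w ^+ (m.-1 - i) * ((- ζ ^- j) *: z) ^+ i.
  rewrite scaler_sumr; apply: eq_bigr => j _; apply: exdiv_eq.
    exact: mpolyX_addZ_neq0.
  have -> : w + ζ ^- j *: z = w - (- ζ ^- j) *: z by rewrite scaleNr opprK.
  rewrite expr0 scale1r -scalerAr -subrXX sjD sj_zXn sj_zbXn !exprZn.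
  rewrite (exprNn (ζ ^+ j)) (exprNn (ζ ^- j)) exprVn zetaX_exprm invr1 mulr1 -/s.
  rewrite scalerBr scalerBl scale1r scalerBl scale1r scalerA ss scale1r.
  by rewrite opprB opprD [z ^+ m + _]addrC addrACA.
rewrite /DunklYbar mderivD mderiv_max_zXn mderiv_max_zbXn add0r quots.
rewrite (sum_zeta_quotients (e := 0) (n := m)); last by rewrite add0n leqnn andbT ltnW.
by rewrite eqxx mul1n !scalerA -scalerBl; congr (_ *: _); ring.
Qed.

Lemma DunklY_scale_zbXn_pred c a : DunklY m c (a *: w ^+ m.-1) = 0.
Proof.
have ζ_neq0 : ζ != 0 by rewrite (prim_root_eq0 ζ_prim) -lt0n ltnW.
have quots : \sum_(j < m) exdiv (a *: w ^+ m.-1 - sj m j (a *: w ^+ m.-1)) (z + ζ ^+ j *: w)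
    = a *: \sum_(j < m) (ζ ^- j) ^+ 1 *:
             \sum_(i < m.-1) w ^+ (m.-1.-1 - i) * ((- ζ ^- j) *: z) ^+ i.
  rewrite scaler_sumr; apply: eq_bigr => j _; apply: exdiv_eq.
    exact: mpolyX_addZ_neq0.
  have ζj_neq0 := expf_neq0 j ζ_neq0.
  have -> : z + ζ ^+ j *: w = ζ ^+ j *: (w - (- ζ ^- j) *: z).
    by rewrite scaleNr opprK scalerDr scalerA (divff ζj_neq0) scale1r addrC.
  rewrite sjZ sj_zbXn expr1 -scalerAl -!scalerAr !scalerA.
  by rewrite mulrCA (divff ζj_neq0) mulr1 -subrXX scalerBr.
rewrite /DunklY mderivZ mderiv0_zbXn scaler0 sub0r quots.
rewrite (sum_zeta_quotients (e := 1) (n := m.-1)).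
  by rewrite mul0n !scale0r !scaler0 oppr0.
by rewrite add1n prednK ?leqnn // ltnW.
Qed.
End DunklComputations.

Section AlgebraicIndependence.
Variable C : numClosedFieldType.

Lemma comp_mpolyX2 (e : 'X_{1..2}) (p1 p2 : poly2 C) :
  'X_[e] \mPo [tuple p1; p2] = p1 ^+ e ord0 * p2 ^+ e ord_max.
Proof.
rewrite comp_mpolyX big_ord_recl big_ord1.
by have -> : lift ord0 ord0 = ord_max :> 'I_2 by apply: val_inj.
Qed.

Lemma alg_indep_mlead (p1 p2 : poly2 C) : p1 != 0 -> p2 != 0 ->
  injective (fun e : 'X_{1..2} => mlead p1 *+ e ord0 + mlead p2 *+ e ord_max)%MM ->
  alg_indep p1 p2.
Proof.
move=> p1_neq0 p2_neq0 f_inj P HP; apply/eqP; apply: contraT => P_neq0.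
set f := fun e : 'X_{1..2} => _ in f_inj.
pose F e := P@_e *: (p1 ^+ e ord0 * p2 ^+ e ord_max).
have mlead_F e : e \in msupp P -> mlead (F e) = f e.
  by rewrite mcoeff_msupp => Pe_neq0; rewrite mleadZ // mleadM ?expf_neq0 // !mleadX.
have sum_F : \sum_(e <- msupp P | predT e) F e = 0.
  by rewrite -[RHS]HP comp_mpolyEX; apply: eq_big => // e _; rewrite comp_mpolyX2.
have uniq_leads : uniq [seq mlead (F e) | e <- msupp P & predT e].
  rewrite filter_predT (eq_in_map _ f _).1 => [|e /mlead_F //].
  by rewrite (map_inj_uniq f_inj); apply: msupp_uniq.
(* With pairwise distinct leading monomials, that of the (zero) sum is their join. *)
have := joins_sup_seq (fun e => mlead (F e)) (mlead_supp P_neq0) (isT : predT _).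
rewrite -mlead_sum // sum_F mlead0 mlead_F ?mlead_supp // => f_lead_le0.
have f_lead0 : f (mlead P) = 0%MM by apply: le_anti; rewrite f_lead_le0 le0m.
have f0 : f 0%MM = 0%MM by apply/mnmP => i; rewrite mnmDE !mulmnE !mnm0E !muln0.
have lead0 : mlead P = 0%MM by apply: f_inj; rewrite f_lead0 f0.
have : (msize P <= 1)%N by rewrite -(mlead_deg P_neq0) lead0 mdeg0.
move/msize1_polyC => P_eq; move: HP P_neq0; rewrite P_eq comp_mpolyC => /eqP.
by rewrite !mpolyC_eq0 => ->.
Qed.

Lemma mlead_zXn_add_zbXn m : (0 < m)%N ->
  exists k : 'I_2, mlead (zv C ^+ m + zbv C ^+ m) = (U_(k) *+ m)%MM.
Proof.
move=> m_gt0; have Um_neq (i j : 'I_2) : i != j -> (U_(i) *+ m != U_(j) *+ m)%MM.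
  move=> /negbTE i_neq_j; apply/eqP => /mnmP/(_ i).
  by rewrite !mulmnE !mnm1E eqxx eq_sym i_neq_j mul1n mul0n => m0; rewrite m0 in m_gt0.
rewrite /zv /zbv !mpolyXn mleadD !mleadXm ?Um_neq //.
by have [_|_] := leP (U_(@ord0 1) *+ m)%MM (U_(ord_max) *+ m)%MM; [exists ord_max|exists ord0].
Qed.

Lemma alg_indep_zzb_zXn_add_zbXn m : (0 < m)%N ->
  alg_indep (zv C * zbv C) (zv C ^+ m + zbv C ^+ m).
Proof.
move=> m_gt0; have [k lead_B] := mlead_zXn_add_zbXn m_gt0.
have lead_A : mlead (zv C * zbv C) = (U_(ord0) + U_(ord_max))%MM.
  by rewrite /zv /zbv -mpolyXD mleadXm.
apply: alg_indep_mlead.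
- by apply: mlead_neq0; rewrite lead_A; apply/eqP => /mnmP/(_ ord0); rewrite mnmDE !mnm1E mnm0E.
- apply: mlead_neq0; rewrite lead_B; apply/eqP => /mnmP/(_ k).
  by rewrite mulmnE mnm1E eqxx mnm0E mul1n => m0; rewrite m0 in m_gt0.
move=> e e' /mnmP same; apply/mnmP => i.
have ord2 (l : 'I_2) : l = ord0 \/ l = ord_max.
  by case: l => [[|[|//]]] ?; [left|right]; apply: val_inj.
have := same ord0; have := same ord_max; rewrite lead_A lead_B !mnmDE !mulmnE !mnmDE !mnm1E.
by have [->|->] := ord2 k; have [->|->] := ord2 i => /=; nia.
Qed.
End AlgebraicIndependence.

Theorem corollary2p5 (C : numClosedFieldType) (m : nat) (hm : (2 <= m)%N) :
  (forall c : C, quasiharmonic m c (zv C ^+ m + zbv C ^+ m)) /\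
  alg_indep (zv C * zbv C) (zv C ^+ m + zbv C ^+ m).
Proof.
split; last exact: alg_indep_zzb_zXn_add_zbXn (ltnW hm).
move=> c; rewrite /quasiharmonic /DunklF DunklYbar_zXn_add_zbXn //.
by rewrite DunklY_scale_zbXn_pred // oppr0.
Qed.
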